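(* For any prime power $q$, there exist unit weighing matrices $W_1,\ldots,W_q$ of order $q^2$ and weight $q$ that are mutually quasi-unbiased for the parameters $(q^2,q,q^2,1)$ and such that, for any distinct $i,j\in\{1,\ldots,q\}$, $W_iW_j^*$ is a Bush-type $(q^2,q)$-Butson Hadamard matrix.
   Context: Let $\mathbb{T}=\{c\in\mathbb{C}:|c|=1\}$ and $W^*$ the conjugate transpose. A unit weighing matrix of order $n$ and weight $k$ is an $n\times n$ matrix $W$ with entries in $\{0\}\cup\mathbb{T}$ with $WW^*=kI_n$. Unit weighing matrices $W_1,W_2$ of order $n$ and weight $k$ are quasi-unbiased for parameters $(n,k,l,a)$ if $\frac1{\sqrt a}W_1W_2^*$ is a unit weighing matrix of order $n$ and weight $l$; mutually quasi-unbiased means pairwise. A complex Hadamard matrix of order $n$ is a unit weighing matrix of order $n$ and weight $n$; an $(n,m)$-Butson Hadamard matrix is a complex Hadamard matrix of order $n$ all of whose entries are $m$-th roots of unity. A complex Hadamard matrix $H$ of order $n^2$ is of Bush-type if, partitioned into $n\times n$ blocks $H=(H_{ij})_{i,j=1}^n$, it satisfies $H_{ii}=J_n$ for all $i$ and $H_{ij}J_n=J_nH_{ij}=O_n$ for all $i\neq j$, where $J_n$ is the all-ones matrix and $O_n$ the zero matrix. *)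

From HB Require Import structures.
From mathcomp Require Import all_boot all_order all_algebra complex.
From mathcomp Require Import Rstruct.
From Stdlib Require Import Reals.

Unset Implicit Arguments.
Unset Printing Implicit Defensive.

Import Order.TTheory GRing.Theory Num.Theory.
Local Open Scope ring_scope.

Definition CC : numClosedFieldType := Rdefinitions.R[i].

Definition ctrmx {C : numClosedFieldType} {m n : nat} (W : 'M[C]_(m, n))
  : 'M[C]_(n, m) := (map_mx Num.conj W)^T.

Definition unit_weighing {C : numClosedFieldType} (n k : nat) (W : 'M[C]_n)
  : Prop :=
  (forall i j, W i j = 0 \/ `|W i j| = 1) /\ W *m ctrmx W = k%:R%:M.

Definition quasi_unbiased {C : numClosedFieldType} (n k l a : nat)
    (W1 W2 : 'M[C]_n) : Prop :=
  unit_weighing n k W1 /\ unit_weighing n k W2 /\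
  unit_weighing n l ((sqrtC (a%:R : C))^-1 *: (W1 *m ctrmx W2)).

Definition mutually_quasi_unbiased {C : numClosedFieldType} (I : finType)
    (n k l a : nat) (W : I -> 'M[C]_n) : Prop :=
  forall i j, i != j -> quasi_unbiased n k l a (W i) (W j).

Definition complex_hadamard {C : numClosedFieldType} (n : nat) (H : 'M[C]_n)
  : Prop := unit_weighing n n H.

Definition butson_hadamard {C : numClosedFieldType} (n m : nat) (H : 'M[C]_n)
  : Prop := complex_hadamard n H /\ (forall i j, H i j ^+ m = 1).

(* the (i,j) block (of size n x n) of a matrix of order n*n, blocks being
   consecutive rows/columns: entry (a,b) of block (i,j) is H (i*n+a) (j*n+b) *)
Definition mxblk {C : numClosedFieldType} (n : nat) (H : 'M[C]_(n * n))
    (i j : 'I_n) : 'M[C]_n :=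
  \matrix_(a < n, b < n) H (mxvec_index i a) (mxvec_index j b).

Definition bush_type {C : numClosedFieldType} (n : nat) (H : 'M[C]_(n * n))
  : Prop :=
  complex_hadamard (n * n) H /\
  (forall i, mxblk n H i i = const_mx 1) /\
  (forall i j, i != j ->
     mxblk n H i j *m (const_mx 1 : 'M[C]_n) = 0 /\
     (const_mx 1 : 'M[C]_n) *m mxblk n H i j = 0).

Local Close Scope ring_scope.
Definition prime_power (q : nat) : Prop :=
  exists p k : nat, [/\ prime p, (0 < k)%N & q = (p ^ k)%N].

From HB Require Import structures.
From mathcomp Require Import all_boot all_order all_algebra complex.
From mathcomp Require Import Rstruct.
From mathcomp Require Import cyclic separable finfield cyclotomic ring.
Import GRing.Theory Num.Theory.
Local Open Scope ring_scope.

Set Implicit Arguments.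
Unset Strict Implicit.

(* Identify ['I_q] with a field [F] of order [q] and fix a primitive [q]-th
   root of unity [w].  The rows of [W i] are indexed by pairs [(x, a)] and its
   columns by pairs [(y, b)]: row [(x, a)] carries the character
   [y |-> w ^ (x y)] on the points of the line [b = a + i y].  Parallel lines
   are equal or disjoint, so [W i W i^*] is [q I] by orthogonality of
   characters.  Two lines of distinct slopes [i], [j] meet in exactly one
   point [y], so each entry of [W i W j^*] is the [q]-th root of unity
   [w ^ ((x - x') y)].  As [a] (or [a']) varies, that meeting point runs over
   all of [F], which makes the diagonal blocks all-ones and gives the
   off-diagonal blocks zero row and column sums. *)

Section PairIndexedMatrix.
Variables (R : pzRingType) (m n : nat).

Definition mxvec_pair (k : 'I_(m * n)) : 'I_m * 'I_n :=
  enum_val (cast_ord (esym (mxvec_cast m n)) k).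

Lemma mxvec_pairK i j : mxvec_pair (mxvec_index i j) = (i, j).
Proof. by rewrite /mxvec_pair cast_ordK enum_rankK. Qed.

Lemma mxvec_pairKV : cancel mxvec_pair (fun s => mxvec_index s.1 s.2).
Proof.
by move=> k; rewrite /mxvec_index -surjective_pairing enum_valK cast_ordKV.
Qed.

Definition pair_mx (K : 'I_m -> 'I_n -> 'I_m -> 'I_n -> R) : 'M[R]_(m * n) :=
  \matrix_(r, c)
    K (mxvec_pair r).1 (mxvec_pair r).2 (mxvec_pair c).1 (mxvec_pair c).2.

Lemma pair_mxE K x a y b :
  pair_mx K (mxvec_index x a) (mxvec_index y b) = K x a y b.
Proof. by rewrite mxE !mxvec_pairK. Qed.

Lemma eq_pair_mx K1 K2 :
  (forall x a y b, K1 x a y b = K2 x a y b) -> pair_mx K1 = pair_mx K2.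
Proof. by move=> eqK; apply/matrixP=> r c; rewrite !mxE eqK. Qed.

Lemma mulmx_pair K1 K2 : pair_mx K1 *m pair_mx K2 =
  pair_mx (fun x a x' a' => \sum_y \sum_b K1 x a y b * K2 y b x' a').
Proof.
apply/matrixP=> r c; rewrite !mxE pair_bigA (reindex _ (curry_mxvec_bij m n)) /=.
by apply: eq_bigr => -[y b] _; rewrite !mxE mxvec_pairK.
Qed.

Lemma pair_mx_scalar K (k : R) :
  (forall x a y b, K x a y b = ((x == y) && (a == b))%:R * k) ->
  pair_mx K = k%:M.
Proof.
move=> DK; apply/matrixP=> r c; rewrite !mxE DK mulr_natl -xpair_eqE.
by rewrite -!surjective_pairing (can_eq mxvec_pairKV).
Qed.

End PairIndexedMatrix.

Section ConjugateTranspose.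
Variable C : numClosedFieldType.

Lemma ctrmx_pair_mx m n (K : 'I_m -> 'I_n -> 'I_m -> 'I_n -> C) :
  ctrmx (pair_mx K) = pair_mx (fun x a y b => (K y b x a)^*).
Proof. by apply/matrixP=> r c; rewrite !mxE. Qed.

Lemma ctrmxM m n p (A : 'M[C]_(m, n)) (B : 'M[C]_(n, p)) :
  ctrmx (A *m B) = ctrmx B *m ctrmx A.
Proof. by rewrite /ctrmx map_mxM trmx_mul. Qed.

Lemma ctrmxK m n (A : 'M[C]_(m, n)) : ctrmx (ctrmx A) = A.
Proof. by apply/matrixP=> r c; rewrite !mxE conjCK. Qed.

Lemma ctrmx_mulmx_scalar n (W : 'M[C]_n) (k : C) :
  k != 0 -> W *m ctrmx W = k%:M -> ctrmx W *m W = k%:M.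
Proof.
move=> k_nz WW; have : (k^-1 *: W) *m ctrmx W = 1%:M.
  by rewrite -scalemxAl WW scale_scalar_mx mulVf.
move/mulmx1C; rewrite -scalemxAr => /(congr1 ( *:%R k)).
by rewrite scalerA mulfV // scale1r scale_scalar_mx mulr1.
Qed.

Lemma mulmx_ctrmx_scalar n (A B : 'M[C]_n) (k : C) : k != 0 ->
  A *m ctrmx A = k%:M -> B *m ctrmx B = k%:M ->
  (A *m ctrmx B) *m ctrmx (A *m ctrmx B) = (k * k)%:M.
Proof.
move=> k_nz AA BB; rewrite ctrmxM ctrmxK mulmxA -(mulmxA A).
rewrite (ctrmx_mulmx_scalar k_nz BB) mul_mx_scalar -scalemxAl AA.
by rewrite scale_scalar_mx.
Qed.

End ConjugateTranspose.

Lemma sum_expr_root1 (R : idomainType) n (z : R) :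
  z ^+ n = 1 -> z != 1 -> \sum_(i < n) z ^+ i = 0.
Proof.
move=> zn1 z_neq1; apply/eqP; have := subrX1 z n.
by rewrite zn1 subrr => /esym/eqP; rewrite mulf_eq0 subr_eq0 (negbTE z_neq1).
Qed.

Lemma prim_root_exists (C : numClosedFieldType) n :
  (0 < n)%N -> {w : C | n.-primitive_root w}.
Proof.
move=> n_gt0; pose p : {poly C} := 'X^n - 1.
have [r Dp] := closed_field_poly_normal p.
apply/sigW; rewrite (monicP _) ?monicXnsubC // scale1r in Dp.
have rn1 : all n.-unity_root r by apply/allP=> z; rewrite -root_prod_XsubC -Dp.
have sz_r : (n < (size r).+1)%N.
  by rewrite -(size_prod_XsubC r id) -Dp size_XnsubC.
have [|w] := hasP (has_prim_root n_gt0 rn1 _ sz_r); last by exists w.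
by rewrite -separable_prod_XsubC -Dp separable_Xn_sub_1 // pnatr_eq0 -lt0n.
Qed.

Section RootsOfUnity.
Variables (C : numClosedFieldType) (n : nat) (w : C).
Hypothesis w_prim : n.-primitive_root w.

Lemma norm_prim_root : `|w| = 1.
Proof.
apply/eqP; rewrite -(pexpr_eq1 (prim_order_gt0 w_prim)) ?normr_ge0 //.
by rewrite -normrX prim_expr_order // normr1.
Qed.

Lemma norm_prim_rootX k : `|w ^+ k| = 1.
Proof. by rewrite normrX norm_prim_root expr1n. Qed.

Lemma conj_prim_rootXK k : (w ^+ k)^* * w ^+ k = 1.
Proof. by rewrite mulrC -normCK norm_prim_rootX expr1n. Qed.

(* As [|w| = 1], this is [w ^ (x - x')]. *)
Definition root_quot (x x' : nat) : C := w ^+ x * (w ^+ x')^*.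

Lemma norm_root_quot x x' : `|root_quot x x'| = 1.
Proof. by rewrite normrM norm_conjC !norm_prim_rootX mulr1. Qed.

Lemma root_quotxx x : root_quot x x = 1.
Proof. by rewrite /root_quot mulrC conj_prim_rootXK. Qed.

Lemma root_quot_expr_order x x' : root_quot x x' ^+ n = 1.
Proof.
rewrite /root_quot exprMn -rmorphXn (exprAC w x) (exprAC w x').
by rewrite !(prim_expr_order w_prim) !expr1n rmorph1 mulr1.
Qed.

Lemma root_quot_eq1 (x x' : 'I_n) : (root_quot x x' == 1) = (x == x').
Proof.
apply/eqP/eqP => [quot1 | ->]; last exact: root_quotxx.
have : w ^+ x = w ^+ x'.
  rewrite -[w ^+ x]mulr1 -(conj_prim_rootXK x') mulrA -/(root_quot x x').
  by rewrite quot1 mul1r.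
by move/eqP; rewrite (eq_prim_root_expr w_prim) !modn_small // => /eqP/val_inj.
Qed.

Lemma sum_root_quotX (x x' : 'I_n) :
  \sum_(y < n) root_quot x x' ^+ y = (x == x')%:R * n%:R.
Proof.
have [<- | neq_xx'] := eqVneq x x'; last first.
  by rewrite mul0r sum_expr_root1 ?root_quot_expr_order ?root_quot_eq1.
rewrite root_quotxx mul1r (eq_bigr (fun=> 1)) ?sumr_const ?card_ord //.
by move=> y _; rewrite expr1n.
Qed.

End RootsOfUnity.

Section AffineLineWeighing.
Variables (C : numClosedFieldType) (q : nat) (F : finFieldType).
Variables (e : 'I_q -> F) (e_inv : F -> 'I_q).
Hypotheses (eK : cancel e e_inv) (e_invK : cancel e_inv e).
Variable w : C.
Hypothesis w_prim : q.-primitive_root w.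

Let q_gt0 : (0 < q)%N. Proof. exact: prim_order_gt0 w_prim. Qed.
Let e_inj : injective e. Proof. exact: can_inj eK. Qed.
Let e_inv_inj : injective e_inv. Proof. exact: can_inj e_invK. Qed.

Definition line_weighing_mx (i : 'I_q) : 'M[C]_(q * q) :=
  pair_mx (fun x a y b => if e b == e a + e i * e y then (w ^+ x) ^+ y else 0).

Local Notation W := line_weighing_mx.

Lemma mul_line_weighing_mx i j : W i *m ctrmx (W j) =
  pair_mx (fun x a x' a' => \sum_(y < q)
    (e a + e i * e y == e a' + e j * e y)%:R * root_quot w x x' ^+ y).
Proof.
rewrite ctrmx_pair_mx mulmx_pair; apply: eq_pair_mx => x a x' a'.
apply: eq_bigr => y _; rewrite (bigD1 (e_inv (e a + e i * e y))) //= e_invK eqxx.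
rewrite big1 ?addr0; last first.
  by move=> b; rewrite -(can_eq e_invK) eK => /negbTE ->; rewrite mul0r.
case: ifP => _; last by rewrite rmorph0 mulr0 mul0r.
by rewrite mul1r /root_quot exprMn rmorphXn.
Qed.

Lemma line_weighing_mx_unit_weighing i : unit_weighing (q * q) q (W i).
Proof.
split=> [r c | ].
  by rewrite mxE; case: ifP; [right; rewrite -exprM (norm_prim_rootX w_prim) | left].
rewrite mul_line_weighing_mx; apply: pair_mx_scalar => x a x' a'.
under eq_bigr => y _ do rewrite (inj_eq (addIr _)).
rewrite -mulr_sumr (sum_root_quotX w_prim) mulrA -natrM mulnb.
by rewrite andbC (can_eq eK).
Qed.

Let subr_neq0 i j : i != j -> e i - e j != 0.
Proof. by rewrite subr_eq0 (inj_eq e_inj). Qed.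

Definition line_meet (i j a a' : 'I_q) : 'I_q :=
  e_inv ((e a' - e a) / (e i - e j)).

Lemma line_meetP i j a a' y : i != j ->
  (e a + e i * e y == e a' + e j * e y) = (y == line_meet i j a a').
Proof.
move/subr_neq0=> d_nz; rewrite /line_meet -(can_eq eK) e_invK.
apply/eqP/eqP => [meet | ->]; last by field.
by rewrite -[e a'](addrK (e j * e y)) -meet; field.
Qed.

Lemma line_meet_injr i j a : i != j -> injective (line_meet i j a).
Proof.
move/subr_neq0=> d_nz b b' /e_inv_inj/(congr1 (fun z => z * (e i - e j) + e a)).
by rewrite !divfK // !subrK => /e_inj.
Qed.

Lemma line_meet_injl i j b : i != j -> injective (line_meet i j ^~ b).
Proof.
move/subr_neq0=> d_nz a a' /e_inv_inj/(congr1 (fun z => e b - z * (e i - e j))).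
by rewrite !divfK // !subKr => /e_inj.
Qed.

Lemma mul_line_weighing_mx_neq i j : i != j -> W i *m ctrmx (W j) =
  pair_mx (fun x a x' a' => root_quot w x x' ^+ line_meet i j a a').
Proof.
move=> neq_ij; rewrite mul_line_weighing_mx; apply: eq_pair_mx => x a x' a'.
under eq_bigr => y _ do rewrite line_meetP //.
rewrite (bigD1 (line_meet i j a a')) //= eqxx mul1r big1 ?addr0 //.
by move=> y /negbTE ->; rewrite mul0r.
Qed.

Lemma line_weighing_mx_hadamard i j : i != j ->
  complex_hadamard (q * q) (W i *m ctrmx (W j)).
Proof.
move=> neq_ij; split=> [r c | ].
  right; rewrite mul_line_weighing_mx_neq // mxE normrX.
  by rewrite (norm_root_quot w_prim) expr1n.
have q_nz : q%:R != 0 :> C by rewrite pnatr_eq0 -lt0n.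
have [_ WiWi] := line_weighing_mx_unit_weighing i.
have [_ WjWj] := line_weighing_mx_unit_weighing j.
by rewrite (mulmx_ctrmx_scalar q_nz WiWi WjWj) natrM.
Qed.

Lemma line_weighing_mx_butson i j : i != j ->
  butson_hadamard (q * q) q (W i *m ctrmx (W j)).
Proof.
move=> neq_ij; split=> [ | r c]; first exact: line_weighing_mx_hadamard.
rewrite mul_line_weighing_mx_neq // mxE exprAC.
by rewrite (root_quot_expr_order w_prim) expr1n.
Qed.

Lemma line_weighing_mx_bush i j : i != j -> bush_type q (W i *m ctrmx (W j)).
Proof.
move=> neq_ij; split; first exact: line_weighing_mx_hadamard.
rewrite mul_line_weighing_mx_neq //; split=> [x | x x' neq_xx'].
  by apply/matrixP=> a b; rewrite mxE pair_mxE mxE (root_quotxx w_prim) expr1n.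
have sum_quot0 : \sum_(y < q) root_quot w x x' ^+ y = 0.
  by rewrite (sum_root_quotX w_prim) (negbTE neq_xx') mul0r.
split; apply/matrixP=> a c; rewrite mxE mxE.
  under eq_bigr => b _ do rewrite mxE pair_mxE mxE mulr1.
  by rewrite (reindex_inj (line_meet_injr (a := a) neq_ij)) in sum_quot0.
under eq_bigr => b _ do rewrite mxE mxE pair_mxE mul1r.
by rewrite (reindex_inj (line_meet_injl (b := c) neq_ij)) in sum_quot0.
Qed.

Lemma line_weighing_mx_quasi_unbiased :
  mutually_quasi_unbiased 'I_q (q * q) q (q * q) 1 W.
Proof.
move=> i j neq_ij; split; first exact: line_weighing_mx_unit_weighing.
split; first exact: line_weighing_mx_unit_weighing.
by rewrite sqrtC1 invr1 scale1r; apply: line_weighing_mx_hadamard.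
Qed.

End AffineLineWeighing.

Lemma prime_power_finField q :
  prime_power q -> exists F : finFieldType, #|F| = q.
Proof.
case=> p [k [p_pr k_gt0 ->]].
have [F _ cardF] := pPrimePowerField p_pr k_gt0.
(* [prime_power] is stated with Stdlib's [Nat.pow], not [expn]. *)
by exists F; rewrite cardF; elim: k {k_gt0 cardF} => // k IHk; rewrite expnS IHk.
Qed.

Theorem theorem6p3 (q : nat) : prime_power q ->
  exists W : 'I_q -> 'M[CC]_(q * q),
    (forall i, unit_weighing (q * q) q (W i)) /\
    mutually_quasi_unbiased 'I_q (q * q) q (q * q) 1 W /\
    (forall i j, i != j ->
       butson_hadamard (q * q) q (W i *m ctrmx (W j)) /\
       bush_type q (W i *m ctrmx (W j))).
Proof.
move=> q_pp; have [F cardF] := prime_power_finField q_pp.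
have q_gt0 : (0 < q)%N by rewrite -cardF (cardD1 0).
have [w w_prim] := @prim_root_exists CC q q_gt0.
pose e (i : 'I_q) : F := enum_val (cast_ord (esym cardF) i).
pose e_inv (f : F) : 'I_q := cast_ord cardF (enum_rank f).
have eK : cancel e e_inv by move=> i; rewrite /e /e_inv enum_valK cast_ordKV.
have e_invK : cancel e_inv e by move=> f; rewrite /e /e_inv cast_ordK enum_rankK.
exists (line_weighing_mx e w); split; first exact: line_weighing_mx_unit_weighing.
split; first exact: line_weighing_mx_quasi_unbiased.
move=> i j neq_ij.
by split; [apply: line_weighing_mx_butson | apply: line_weighing_mx_bush].
Qed.
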